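(* Let $\langle D,E,e,\varepsilon\rangle$ be a restricted Priestley duality between a variety $\mathcal A$ and a category $\mathcal X$. A homomorphism $u\colon\mathbf B\to\mathbf A_1\times\mathbf A_2$ in $\mathcal A$ is an embedding if and only if the two morphisms $D(\pi_i\circ u)\colon D(\mathbf A_i)\to D(\mathbf B)$, $i\in\{1,2\}$, are jointly $\mathcal P$-surjective, where $\pi_i\colon\mathbf A_1\times\mathbf A_2\to\mathbf A_i$ is the $i$th projection.
   Context: $\mathcal D$: bounded distributive lattices; $\mathcal P$: Priestley spaces. Priestley duality: $H(\mathbf L)=\mathcal D(\mathbf L,\mathbf 2)$, $K(\mathbb X)=\mathcal P(\mathbb X,\mathbbm 2)$, morphisms by precomposition, unit and counit by evaluation. A restricted Priestley duality $\langle D,E,e,\varepsilon\rangle$: $\mathcal A$ a variety with a term reduct in $\mathcal D$ and forgetful functor ${}^\flat\colon\mathcal A\to\mathcal D$; $\mathcal X$ a category with functor ${}^\flat\colon\mathcal X\to\mathcal P$; $D,E$ a dual equivalence with unit $e$ and counit $\varepsilon$ such that ${}^\flat\circ D=H\circ{}^\flat$, ${}^\flat\circ E=K\circ{}^\flat$, $e_{\mathbf A}^\flat=e_{\mathbf A^\flat}$, $\varepsilon_{\mathbb X}^\flat=\varepsilon_{\mathbb X^\flat}$. Morphisms $\phi_1,\phi_2$ of $\mathcal X$ with common codomain $\mathbb Y$ are jointly $\mathcal P$-surjective if the images of $\phi_1^\flat$ and $\phi_2^\flat$ together cover $\mathbb Y^\flat$. *)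

From Stdlib Require Import List.
From mathcomp Require Import all_boot.

Set Implicit Arguments.
Unset Strict Implicit.
Unset Printing Implicit Defensive.

Record Sig := { sym : Type; ar : sym -> nat }.

Inductive term (S : Sig) (V : Type) : Type :=
| Var : V -> term S V
| App : forall s : sym S, ('I_(ar s) -> term S V) -> term S V.

Record Alg (S : Sig) := {
  car : Type;
  op : forall s : sym S, ('I_(ar s) -> car) -> car }.
Arguments op {S} a s _ : rename.

Fixpoint eval (S : Sig) (A : Alg S) (V : Type) (env : V -> car A)
  (t : term S V) : car A :=
  match t with
  | Var x => env x
  | App s args => op A s (fun i => eval env (args i))
  end.

Record AHom (S : Sig) (A B : Alg S) := {
  hfun : car A -> car B;
  hmor : forall s (args : 'I_(ar s) -> car A),
      hfun (op A s args) = op B s (fun i => hfun (args i)) }.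

Definition idAHom (S : Sig) (A : Alg S) : AHom A A :=
  @Build_AHom S A A id (fun s args => erefl).

Program Definition compAHom (S : Sig) (A B C : Alg S)
  (g : AHom B C) (f : AHom A B) : AHom A C :=
  @Build_AHom S A C (fun a => hfun g (hfun f a)) _.
Next Obligation. by rewrite !hmor. Qed.

Definition prodAlg (S : Sig) (A1 A2 : Alg S) : Alg S :=
  @Build_Alg S (car A1 * car A2)%type
    (fun s args => (op A1 s (fun i => (args i).1), op A2 s (fun i => (args i).2))).

Definition proj1A (S : Sig) (A1 A2 : Alg S) : AHom (prodAlg A1 A2) A1 :=
  @Build_AHom S (prodAlg A1 A2) A1 fst (fun s args => erefl).
Definition proj2A (S : Sig) (A1 A2 : Alg S) : AHom (prodAlg A1 A2) A2 :=
  @Build_AHom S (prodAlg A1 A2) A2 snd (fun s args => erefl).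

Definition satisfies (S : Sig) (Eqs : term S nat -> term S nat -> Prop)
  (A : Alg S) : Prop :=
  forall t1 t2, Eqs t1 t2 -> forall env : nat -> car A, eval env t1 = eval env t2.

(* objects of the variety A = Mod(Eqs) *)
Record VObj (S : Sig) (Eqs : term S nat -> term S nat -> Prop) := {
  valg : Alg S;
  vin : satisfies Eqs valg }.

Definition embedding (S : Sig) (A B : Alg S) (u : AHom A B) : Prop :=
  injective (hfun u).

(* binary terms use variables true (first arg) / false (second arg);
   constants are closed terms (no variables) *)
Record Reduct (S : Sig) := {
  r_meet : term S bool; r_join : term S bool;
  r_top : term S Empty_set; r_bot : term S Empty_set }.

Definition env2 (T : Type) (a b : T) : bool -> T := fun x => if x then a else b.
Definition env0 (T : Type) : Empty_set -> T := fun e => match e with end.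

Definition rmeet S (R : Reduct S) (A : Alg S) (a b : car A) := eval (env2 a b) (r_meet R).
Definition rjoin S (R : Reduct S) (A : Alg S) (a b : car A) := eval (env2 a b) (r_join R).
Definition rtop S (R : Reduct S) (A : Alg S) : car A := eval (@env0 _) (r_top R).
Definition rbot S (R : Reduct S) (A : Alg S) : car A := eval (@env0 _) (r_bot R).

Definition is_bdl (T : Type) (m j : T -> T -> T) (t b : T) : Prop :=
  (forall x y z, m x (m y z) = m (m x y) z) /\
  (forall x y z, j x (j y z) = j (j x y) z) /\
  (forall x y, m x y = m y x) /\
  (forall x y, j x y = j y x) /\
  (forall x y, m x (j x y) = x) /\ (forall x y, j x (m x y) = x) /\
  (forall x y z, m x (j y z) = j (m x y) (m x z)) /\
  (forall x, m x t = x) /\ (forall x, j x b = x).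

(* "A has a term reduct in D": the derived operations form a bounded
   distributive lattice A^flat on every member of the variety *)
Definition term_reduct S (Eqs : term S nat -> term S nat -> Prop) (R : Reduct S) :=
  forall A : Alg S, satisfies Eqs A ->
    is_bdl (@rmeet S R A) (@rjoin S R A) (rtop R A) (rbot R A).

(* bounded lattice homomorphisms A^flat -> 2 : the points of H(A^flat) *)
Record LHom S (R : Reduct S) (A : Alg S) := {
  lfun : car A -> bool;
  lmeet : forall a b, lfun (rmeet R a b) = lfun a && lfun b;
  ljoin : forall a b, lfun (rjoin R a b) = lfun a || lfun b;
  ltop : lfun (rtop R A) = true;
  lbot : lfun (rbot R A) = false }.

(* topology of H(L) : generated by the subbasic sets {f | f a = c} *)
Definition hopen S (R : Reduct S) (A : Alg S) (U : LHom R A -> Prop) : Prop :=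
  forall f, U f -> exists ps : list (car A * bool),
    Forall (fun p => lfun f p.1 = p.2) ps /\
    (forall g, Forall (fun p => lfun g p.1 = p.2) ps -> U g).

Record PSpace := {
  pcar : Type;
  ple : pcar -> pcar -> Prop;
  popen : (pcar -> Prop) -> Prop;
  ple_refl : forall x, ple x x;
  ple_trans : forall x y z, ple x y -> ple y z -> ple x z;
  ple_anti : forall x y, ple x y -> ple y x -> x = y;
  popen_ext : forall U V, popen U -> (forall x, U x <-> V x) -> popen V;
  popen_full : popen (fun _ => True);
  popen_inter : forall U V, popen U -> popen V -> popen (fun x => U x /\ V x);
  popen_union : forall (I : Type) (U : I -> pcar -> Prop),
      (forall i, popen (U i)) -> popen (fun x => exists i, U i x);
  pcompact : forall (I : Type) (U : I -> pcar -> Prop),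
      (forall i, popen (U i)) -> (forall x, exists i, U i x) ->
      exists l : list I, forall x, exists2 i, In i l & U i x;
  psep : forall x y, ~ ple x y ->
      exists U : pcar -> Prop,
        [/\ popen U, popen (fun z => ~ U z),
            (forall z w, U z -> ple z w -> U w), U x & ~ U y] }.

(* points of K(Y) = P(Y, 2): continuous order-preserving maps into 2 *)
Record CMap (Y : PSpace) := {
  cfun : pcar Y -> bool;
  cmono : forall x y, ple x y -> cfun x -> cfun y;
  ccont : forall c, popen (fun x => cfun x = c) }.

Record Cat := {
  ob : Type;
  hom : ob -> ob -> Type;
  idm : forall a, hom a a;
  cmp : forall a b c, hom b c -> hom a b -> hom a c;
  cmp_idl : forall a b (f : hom a b), cmp (idm b) f = f;
  cmp_idr : forall a b (f : hom a b), cmp f (idm a) = f;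
  cmp_assoc : forall a b c d (h : hom c d) (g : hom b c) (f : hom a b),
      cmp h (cmp g f) = cmp (cmp h g) f }.

Arguments idm {c} a : rename.
Arguments cmp {c a b c0} _ _ : rename.

Record FlatF (X : Cat) := {
  fob : ob X -> PSpace;
  fhom : forall x y, hom x y -> pcar (fob x) -> pcar (fob y);
  fmono : forall x y (f : hom x y) p q, ple p q -> ple (fhom f p) (fhom f q);
  fcont : forall x y (f : hom x y) U, popen U -> popen (fun p => U (fhom f p));
  fid : forall x p, fhom (idm x) p = p;
  fcmp : forall x y z (f : hom x y) (g : hom y z) p,
      fhom (cmp g f) p = fhom g (fhom f p) }.

Arguments fhom {X} F {x y} _ _ : rename.

(* The conditions ^flat o D = H o ^flat, ^flat o E = K o ^flat,         *)
(* e_A^flat = e_{A^flat}, eps_X^flat = eps_{X^flat} are expressed via   *)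
(* given identifications phi_A : D(A)^flat ~ H(A^flat) and              *)
(* psi_X : E(X)^flat ~ K(X^flat).              *)

Unset Implicit Arguments.
Record RPD (S : Sig) (Eqs : term S nat -> term S nat -> Prop) (R : Reduct S)
  (X : Cat) (F : FlatF X) := {
  Dob : VObj Eqs -> ob X;
  Dhom : forall A B : VObj Eqs, AHom (valg A) (valg B) -> hom (Dob B) (Dob A);
  D_id : forall A, Dhom A A (idAHom (valg A)) = idm (Dob A);
  D_cmp : forall (A B C : VObj Eqs) (f : AHom (valg A) (valg B))
      (g : AHom (valg B) (valg C)),
      Dhom A C (compAHom g f) = cmp (Dhom A B f) (Dhom B C g);
  Eob : ob X -> VObj Eqs;
  Ehom : forall x y, hom x y -> AHom (valg (Eob y)) (valg (Eob x));
  E_id : forall x a, hfun (Ehom x x (idm x)) a = a;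
  E_cmp : forall x y z (f : hom x y) (g : hom y z) a,
      hfun (Ehom x z (cmp g f)) a = hfun (Ehom x y f) (hfun (Ehom y z g) a);
  eu : forall A : VObj Eqs, AHom (valg A) (valg (Eob (Dob A)));
  eu_nat : forall (A B : VObj Eqs) (h : AHom (valg A) (valg B)) a,
      hfun (Ehom _ _ (Dhom A B h)) (hfun (eu A) a) = hfun (eu B) (hfun h a);
  eu_iso : forall A, exists g : AHom (valg (Eob (Dob A))) (valg A),
      (forall a, hfun g (hfun (eu A) a) = a) /\
      (forall b, hfun (eu A) (hfun g b) = b);
  ec : forall x, hom x (Dob (Eob x));
  ec_nat : forall x y (f : hom x y),
      cmp (Dhom _ _ (Ehom x y f)) (ec x) = cmp (ec y) f;
  ec_iso : forall x, exists g : hom (Dob (Eob x)) x,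
      cmp g (ec x) = idm x /\ cmp (ec x) g = idm _;
  phi : forall A : VObj Eqs, pcar (fob F (Dob A)) -> LHom R (valg A);
  phi_inj : forall A p q, (forall a, lfun (phi A p) a = lfun (phi A q) a) -> p = q;
  phi_surj : forall A (g : LHom R (valg A)),
      exists p, forall a, lfun (phi A p) a = lfun g a;
  phi_ord : forall A p q,
      ple p q <-> (forall a, lfun (phi A p) a -> lfun (phi A q) a);
  phi_top : forall A (V : LHom R (valg A) -> Prop),
      hopen V <-> popen (fun p => V (phi A p));
  phi_nat : forall (A B : VObj Eqs) (h : AHom (valg A) (valg B)) p a,
      lfun (phi A (fhom F (Dhom A B h) p)) a = lfun (phi B p) (hfun h a);
  psi : forall x, car (valg (Eob x)) -> CMap (fob F x);
  psi_inj : forall x a b, (forall p, cfun (psi x a) p = cfun (psi x b) p) -> a = b;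
  psi_surj : forall x (g : CMap (fob F x)),
      exists a, forall p, cfun (psi x a) p = cfun g p;
  psi_meet : forall x a b p,
      cfun (psi x (rmeet R a b)) p = cfun (psi x a) p && cfun (psi x b) p;
  psi_join : forall x a b p,
      cfun (psi x (rjoin R a b)) p = cfun (psi x a) p || cfun (psi x b) p;
  psi_top : forall x p, cfun (psi x (rtop R (valg (Eob x)))) p = true;
  psi_bot : forall x p, cfun (psi x (rbot R (valg (Eob x)))) p = false;
  psi_nat : forall x y (f : hom x y) b p,
      cfun (psi x (hfun (Ehom x y f) b)) p = cfun (psi y b) (fhom F f p);
  eu_flat : forall A a p,
      cfun (psi (Dob A) (hfun (eu A) a)) p = lfun (phi A p) a;
  ec_flat : forall x p b,
      lfun (phi (Eob x) (fhom F (ec x) p)) b = cfun (psi x b) p }.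

Set Implicit Arguments.
Arguments Dhom {S Eqs R X F} r {A B} _.

Definition jointly_P_surj (X : Cat) (F : FlatF X) (y1 y2 y : ob X)
  (f1 : hom y1 y) (f2 : hom y2 y) : Prop :=
  forall q : pcar (fob F y),
    (exists p, fhom F f1 p = q) \/ (exists p, fhom F f2 p = q).

From mathcomp Require Import all_boot.
From Stdlib Require Import Classical FunctionalExtensionality.
From Stdlib Require List.

Set Implicit Arguments.
Unset Strict Implicit.
Unset Printing Implicit Defensive.

(** Every point [q] of [D(B)] is a lattice homomorphism [B -> 2]. If [q] is
    not in the image of [D(x)] for a homomorphism [x : B -> A], compactness of
    [D(A)] yields [f, j] with [q f = 1], [q j = 0] and [x f <= x j]. If this
    happens for both [pi_1 u] and [pi_2 u], then [f1 /\ f2 <= j1 \/ j2] holds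
    after applying [u], hence in [B] when [u] is injective, contradicting
    [q (f1 /\ f2) = 1] and [q (j1 \/ j2) = 0]. Conversely, jointly surjective
    duals mean every point of [D(B)] factors through [u], and points of [D(B)]
    separate the elements of [B]. All lattice reasoning happens pointwise in
    [2]. *)

Lemma eval_ext (S : Sig) (A : Alg S) (V : Type) (e1 e2 : V -> car A)
    (t : term S V) :
  (forall v, e1 v = e2 v) -> eval e1 t = eval e2 t.
Proof.
move=> e12; elim: t => [v|s args IH] /=; first exact: e12.
by congr (op A s); apply: functional_extensionality => i; apply: IH.
Qed.

Lemma hom_eval (S : Sig) (A B : Alg S) (h : AHom A B) (V : Type)
    (env : V -> car A) (t : term S V) :
  hfun h (eval env t) = eval (fun v => hfun h (env v)) t.
Proof.
elim: t => [v|s args IH] //=; rewrite hmor.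
by congr (op B s); apply: functional_extensionality => i; apply: IH.
Qed.

Section ReductHomomorphisms.

Variables (S : Sig) (R : Reduct S) (A B : Alg S) (h : AHom A B).

Lemma hom_rmeet a b : hfun h (rmeet R a b) = rmeet R (hfun h a) (hfun h b).
Proof. by rewrite /rmeet hom_eval; apply: eval_ext => -[]. Qed.

Lemma hom_rjoin a b : hfun h (rjoin R a b) = rjoin R (hfun h a) (hfun h b).
Proof. by rewrite /rjoin hom_eval; apply: eval_ext => -[]. Qed.

Lemma hom_rtop : hfun h (rtop R A) = rtop R B.
Proof. by rewrite /rtop hom_eval; apply: eval_ext => -[]. Qed.

Lemma hom_rbot : hfun h (rbot R A) = rbot R B.
Proof. by rewrite /rbot hom_eval; apply: eval_ext => -[]. Qed.

Definition lhom_comp (g : LHom R B) : LHom R A :=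
  {| lfun := fun a => lfun g (hfun h a);
     lmeet := fun a b => etrans (congr1 (lfun g) (hom_rmeet a b)) (lmeet g _ _);
     ljoin := fun a b => etrans (congr1 (lfun g) (hom_rjoin a b)) (ljoin g _ _);
     ltop := etrans (congr1 (lfun g) hom_rtop) (ltop g);
     lbot := etrans (congr1 (lfun g) hom_rbot) (lbot g) |}.

End ReductHomomorphisms.

Lemma lfun_foldr_rmeet (S : Sig) (R : Reduct S) (A : Alg S) (g : LHom R A)
    (s : seq (car A)) :
  lfun g (foldr (@rmeet S R A) (rtop R A) s) = all (lfun g) s.
Proof. by elim: s => [|a s IH] /=; rewrite ?ltop // lmeet IH. Qed.

Lemma lfun_foldr_rjoin (S : Sig) (R : Reduct S) (A : Alg S) (g : LHom R A)
    (s : seq (car A)) :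
  lfun g (foldr (@rjoin S R A) (rbot R A) s) = has (lfun g) s.
Proof. by elim: s => [|a s IH] /=; rewrite ?lbot // ljoin IH. Qed.

Section CompactFamilyOfPoints.

Variables (S : Sig) (R : Reduct S) (B : Alg S) (Y : PSpace).
Variable k : pcar Y -> LHom R B.
Hypothesis k_open : forall b c, popen (fun p => lfun (k p) b = c).

Lemma popen_lfun_implies (a b : car B) :
  popen (fun p => lfun (k p) a ==> lfun (k p) b).
Proof.
apply: (popen_ext (popen_union
  (U := fun (c : bool) p => lfun (k p) (if c then b else a) = c)
  (fun c => k_open _ _))) => p.
split; first by case=> -[] ->; rewrite ?implybT.
by case ka: (lfun (k p) a) => /= kb; [exists true | exists false].
Qed.

(* Compactness of [Y], applied to the open sets [{p | k p f ==> k p j}]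
   for all pairs with [g f && ~~ g j]. *)
Lemma point_or_separated (g : LHom R B) :
  (exists p, forall b, lfun (k p) b = lfun g b) \/
  exists f j, [/\ lfun g f, ~~ lfun g j
                & forall p, lfun (k p) f -> lfun (k p) j].
Proof.
pose I := {i : car B * car B | lfun g i.1 && ~~ lfun g i.2}.
have [[p respects]|no_point] :=
  classic (exists p, forall i : I, lfun (k p) (sval i).1 && ~~ lfun (k p) (sval i).2).
  left; exists p => b; case gb: (lfun g b).
    have gsep : lfun g b && ~~ lfun g (rbot R B) by rewrite gb lbot.
    by case/andP: (respects (exist _ (b, rbot R B) gsep)).
  have gsep : lfun g (rtop R B) && ~~ lfun g b by rewrite gb ltop.
  by case/andP: (respects (exist _ (rtop R B, b) gsep)) => _ /negbTE.
right.
have cover p : exists i : I, lfun (k p) (sval i).1 ==> lfun (k p) (sval i).2.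
  have [i /negP] := not_all_ex_not _ _ (not_ex_all_not _ _ no_point p).
  by rewrite negb_and negbK -implybE; exists i.
have [l cover_l] := pcompact (fun i : I => popen_lfun_implies _ _) cover.
exists (foldr (@rmeet S R B) (rtop R B) [seq (sval i).1 | i <- l]),
       (foldr (@rjoin S R B) (rbot R B) [seq (sval i).2 | i <- l]).
rewrite !lfun_foldr_rmeet !lfun_foldr_rjoin !all_map !has_map; split.
- by apply/(List.forallb_forall _ l) => i _; case/andP: (svalP i).
- apply/negP => /(List.existsb_exists _ l) [i [_ /=]].
  by case/andP: (svalP i) => _ /negbTE ->.
- move=> p; rewrite lfun_foldr_rmeet lfun_foldr_rjoin all_map has_map => kf.
  have [i il /implyP ki] := cover_l p.
  apply/(List.existsb_exists _ l); exists i; split=> //; apply/ki.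
  exact: (proj1 (List.forallb_forall _ l) kf i il).
Qed.

End CompactFamilyOfPoints.

Section RestrictedDuality.

Variables (S : Sig) (Eqs : term S nat -> term S nat -> Prop) (R : Reduct S).
Variables (X : Cat) (F : FlatF X) (Du : RPD S Eqs R X F).

Local Notation pt := (phi _ _ _ _ _ Du).

Lemma phi_separates (A : VObj Eqs) (a a' : car (valg A)) :
  (forall p, lfun (pt A p) a = lfun (pt A p) a') -> a = a'.
Proof.
move=> aa'; have [g [euK _]] := eu_iso _ _ _ _ _ Du A.
rewrite -(euK a) -(euK a'); congr (hfun g).
by apply: (psi_inj _ _ _ _ _ Du) => p; rewrite !eu_flat.
Qed.

Lemma popen_phi_eq (A : VObj Eqs) (a : car (valg A)) (c : bool) :
  popen (fun p => lfun (pt A p) a = c).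
Proof.
apply: (proj1 (phi_top _ _ _ _ _ Du A (fun g => lfun g a = c))) => g ga.
exists [:: (a, c)]; split; first by constructor.
by move=> g' gac; apply: (List.Forall_inv gac).
Qed.

Lemma hom_rmeet_of_points (B A : VObj Eqs) (x : AHom (valg B) (valg A))
    (f j : car (valg B)) :
  (forall p, lfun (pt A p) (hfun x f) -> lfun (pt A p) (hfun x j)) ->
  hfun x (rmeet R f j) = hfun x f.
Proof.
by move=> fj; apply: phi_separates => p; rewrite hom_rmeet lmeet; apply/andb_idr/fj.
Qed.

Lemma Dhom_image_or_separated (B A : VObj Eqs) (x : AHom (valg B) (valg A))
    (q : pcar (fob F (Dob _ _ _ _ _ Du B))) :
  (exists p, fhom F (Dhom Du x) p = q) \/
  exists f j, [/\ lfun (pt B q) f, ~~ lfun (pt B q) j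
    & forall p, lfun (pt A p) (hfun x f) -> lfun (pt A p) (hfun x j)].
Proof.
have [[p kq]|] := point_or_separated (k := fun p => lhom_comp x (pt A p))
  (fun b => popen_phi_eq (hfun x b)) (pt B q); last by right.
by left; exists p; apply: (phi_inj _ _ _ _ _ Du) => b; rewrite phi_nat; apply: kq.
Qed.

End RestrictedDuality.

Theorem lemma2p11 (S : Sig) (Eqs : term S nat -> term S nat -> Prop)
  (R : Reduct S) (hred : term_reduct Eqs R)
  (X : Cat) (F : FlatF X) (Du : RPD S Eqs R X F)
  (B A1 A2 : VObj Eqs) (u : AHom (valg B) (prodAlg (valg A1) (valg A2))) :
  embedding u <->
  jointly_P_surj F (Dhom Du (compAHom (proj1A (valg A1) (valg A2)) u))
                   (Dhom Du (compAHom (proj2A (valg A1) (valg A2)) u)).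
Proof.
set u1 := compAHom _ u; set u2 := compAHom _ u.
split=> [u_inj q|surj a a' ua]; last first.
  apply: (phi_separates (Du := Du)) => q.
  by case: (surj q) => -[p <-]; rewrite !phi_nat /= ua.
have [|[f1 [j1 [qf1 qj1 le1]]]] := Dhom_image_or_separated u1 q; first by left.
have [|[f2 [j2 [qf2 qj2 le2]]]] := Dhom_image_or_separated u2 q; first by right.
pose f := rmeet R f1 f2; pose j := rjoin R j1 j2.
have fj : rmeet R f j = f.
  apply: u_inj; apply: injective_projections.
    apply: (hom_rmeet_of_points (Du := Du) (x := u1)) => p.
    by rewrite !hom_rmeet !hom_rjoin lmeet ljoin => /andP[/le1 ->].
  apply: (hom_rmeet_of_points (Du := Du) (x := u2)) => p.
  by rewrite !hom_rmeet !hom_rjoin lmeet ljoin => /andP[_ /le2 ->]; rewrite orbT.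
have := congr1 (lfun (phi _ _ _ _ _ Du B q)) fj.
by rewrite !lmeet ljoin qf1 qf2 (negbTE qj1) (negbTE qj2).
Qed.
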